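(* The vertical extension $(X^*,\mathcal L^*,d^* )$ of a reduced Birkhoff--Beatley system $(X,\mathcal L,d)$ is a reduced Birkhoff--Beatley system.
   Context: A reduced Birkhoff--Beatley system is a triple $(X,\mathcal L,d)$ where $X$ is a set with at least two elements (points), $\mathcal L$ is a family of subsets of $X$ (lines), and $d\colon X^2\to\mathbb R$ is a function (metric), such that: (i) any two distinct points of $X$ lie in a unique line of $\mathcal L$; (ii) for each $\ell\in\mathcal L$ there is a bijection $c\colon\mathbb R\to\ell$ (a ruler) with $d(c(t),c(s))=|t-s|$ for all $s,t$. The vertical extension of $(X,\mathcal L,d)$ is $(X^*,\mathcal L^*,d^* )$ where $X^*=X\times\mathbb R$, $d^*((x_0,y_0),(x_1,y_1))=\sqrt{d(x_0,x_1)^2+(y_0-y_1)^2}$, and $\mathcal L^*$ consists of the following lines, one for each pair of distinct points $(x_0,y_0)\ne(x_1,y_1)$ of $X^*$: if $x_0\neq x_1$, let $\ell\in\mathcal L$ be the line through $x_0,x_1$, $c\colon\mathbb R\to\ell$ a ruler with $c(s_0)=x_0$, $c(s_1)=x_1$, $a:=((s_0-s_1)^2+(y_0-y_1)^2)^{-1/2}$, and the line is $\{c^*(t)\mid t\in\mathbb R\}$ with $c^*(t)=\bigl(c(at(s_1-s_0)+s_0),\,at(y_1-y_0)+y_0\bigr)$; if $x_0=x_1$ (so $y_0\neq y_1$), the line is $\{x_0\}\times\mathbb R$. *)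

From Stdlib Require Import Reals.
Open Scope R_scope.

Definition is_ruler {X : Type} (d : X -> X -> R) (l : X -> Prop) (c : R -> X) : Prop :=
  (forall t, l (c t)) /\
  (forall x, l x -> exists t, c t = x) /\
  (forall t s, c t = c s -> t = s) /\
  (forall t s, d (c t) (c s) = Rabs (t - s)).

Definition reduced_BB {X : Type} (L : (X -> Prop) -> Prop) (d : X -> X -> R) : Prop :=
  (exists x y : X, x <> y) /\
  (forall x y : X, x <> y -> exists! l : X -> Prop, L l /\ l x /\ l y) /\
  (forall l, L l -> exists c : R -> X, is_ruler d l c).

Definition vext_d {X : Type} (d : X -> X -> R) (p q : X * R) : R :=
  sqrt (d (fst p) (fst q) ^ 2 + (snd p - snd q) ^ 2).

Definition vext_L {X : Type} (L : (X -> Prop) -> Prop) (d : X -> X -> R)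
  (S : X * R -> Prop) : Prop :=
  exists (x0 : X) (y0 : R) (x1 : X) (y1 : R),
    (x0, y0) <> (x1, y1) /\
    ( (x0 <> x1 /\
       exists (l : X -> Prop) (c : R -> X) (s0 s1 : R),
         L l /\ l x0 /\ l x1 /\ is_ruler d l c /\ c s0 = x0 /\ c s1 = x1 /\
         let a := / sqrt ((s0 - s1) ^ 2 + (y0 - y1) ^ 2) in
         S = (fun p => exists t : R,
                p = (c (a * t * (s1 - s0) + s0), a * t * (y1 - y0) + y0)))
      \/
      (x0 = x1 /\ S = (fun p => fst p = x0)) ).

From Stdlib Require Import Reals Lra Psatz Classical.
From Stdlib Require Import FunctionalExtensionality PropExtensionality.
Open Scope R_scope.

(* A line of the vertical extension is either a vertical line {x} x R or the
   image of a "slanted" affine parametrisation t |-> (c (A t + B), C t + D),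
   where c is a ruler of a line of X, A <> 0 and A^2 + C^2 = 1.
   - Rulers: any parametrisation f of a set with d (f t) (f s) = |t - s| is a
     ruler of its image (injectivity is automatic).  Slanted parametrisations
     with A^2 + C^2 = 1 are such isometries, and so is t |-> (x, t) since
     d x x = 0 in a reduced Birkhoff--Beatley system.
   - Existence of a line through two points is read off the definition.
   - Uniqueness: a slanted line meets every vertical line at most once, so two
     points on a common vertical line lie on no slanted line.  Two slanted lines
     through p <> q come from the same line l of X (uniqueness in X); two rulers
     of l differ by an affine change of parameter, after which both lines are
     images of affine maps into l x R agreeing at two distinct points, hence
     equal. *)

Lemma sqrt_pow2_abs (x : R) : sqrt (x ^ 2) = Rabs x.
Proof. rewrite <- pow2_abs. apply sqrt_pow2, Rabs_pos. Qed.

Lemma inv_norm_spec (u v : R) : u <> 0 ->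
  / sqrt (u ^ 2 + v ^ 2) <> 0 /\
  (/ sqrt (u ^ 2 + v ^ 2) * u) ^ 2 + (/ sqrt (u ^ 2 + v ^ 2) * v) ^ 2 = 1.
Proof.
  intro Hu.
  assert (Hpos : 0 < u ^ 2 + v ^ 2) by (pose proof (pow2_ge_0 v); nra).
  assert (Hr : 0 < sqrt (u ^ 2 + v ^ 2)) by (apply sqrt_lt_R0; exact Hpos).
  assert (Hrr : sqrt (u ^ 2 + v ^ 2) * sqrt (u ^ 2 + v ^ 2) = u ^ 2 + v ^ 2)
    by (apply sqrt_sqrt; lra).
  set (r := sqrt (u ^ 2 + v ^ 2)) in *.
  split.
  - apply Rinv_neq_0_compat; lra.
  - replace ((/ r * u) ^ 2 + (/ r * v) ^ 2) with ((u ^ 2 + v ^ 2) / (r * r))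
      by (field; lra).
    rewrite Hrr. field. lra.
Qed.

Lemma real_isometry_affine (s0 s1 s t : R) :
  Rabs (s1 - s0) = 1 -> Rabs (s - s0) = Rabs t -> Rabs (s - s1) = Rabs (t - 1) ->
  s = (s1 - s0) * t + s0.
Proof.
  intros H1 H2 H3.
  assert (E1 : (s1 - s0) ^ 2 = 1) by (rewrite <- pow2_abs, H1; ring).
  assert (E2 : (s - s0) ^ 2 = t ^ 2) by (rewrite <- pow2_abs, H2, pow2_abs; reflexivity).
  assert (E3 : (s - s1) ^ 2 = (t - 1) ^ 2)
    by (rewrite <- pow2_abs, H3, pow2_abs; reflexivity).
  assert (E : (s - s0) * (s1 - s0) = t) by nra.
  nra.
Qed.

Lemma affine_image_incl (A B C D A' B' C' D' t1 t2 t1' t2' : R) :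
  t1 <> t2 ->
  A * t1 + B = A' * t1' + B' -> C * t1 + D = C' * t1' + D' ->
  A * t2 + B = A' * t2' + B' -> C * t2 + D = C' * t2' + D' ->
  forall t, exists t', A * t + B = A' * t' + B' /\ C * t + D = C' * t' + D'.
Proof.
  intros Ht H1 H2 H3 H4 t.
  assert (Ht' : t2 - t1 <> 0) by lra.
  assert (EA : A' * (t2' - t1') = A * (t2 - t1)) by lra.
  assert (EC : C' * (t2' - t1') = C * (t2 - t1)) by lra.
  exists (t1' + (t - t1) * (t2' - t1') / (t2 - t1)).
  split.
  - replace (A' * (t1' + (t - t1) * (t2' - t1') / (t2 - t1)) + B')
      with (A' * t1' + B' + (t - t1) * (A' * (t2' - t1')) / (t2 - t1)) by (field; auto).
    rewrite EA, <- H1. field. auto.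
  - replace (C' * (t1' + (t - t1) * (t2' - t1') / (t2 - t1)) + D')
      with (C' * t1' + D' + (t - t1) * (C' * (t2' - t1')) / (t2 - t1)) by (field; auto).
    rewrite EC, <- H2. field. auto.
Qed.

Definition image {Y : Type} (f : R -> Y) : Y -> Prop := fun y => exists t, y = f t.

Lemma image_ext {Y : Type} (f g : R -> Y) : (forall t, f t = g t) -> image f = image g.
Proof. intro H. apply functional_extensionality in H. now subst. Qed.

Lemma isometry_ruler {Y : Type} (dY : Y -> Y -> R) (f : R -> Y) :
  (forall t s, dY (f t) (f s) = Rabs (t - s)) -> is_ruler dY (image f) f.
Proof.
  intro Hd. split; [|split; [|split]].
  - intro t. now exists t.
  - intros y [t Ht]. now exists t.
  - intros t s Hts.
    assert (H0 : Rabs (t - s) = 0).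
    { rewrite <- Hd, Hts, Hd. replace (s - s) with 0 by ring. apply Rabs_R0. }
    destruct (Req_dec (t - s) 0) as [E|E]; [lra | exact (False_ind _ (Rabs_no_R0 _ E H0))].
  - exact Hd.
Qed.

Lemma ruler_reparam {X : Type} (d : X -> X -> R) (l : X -> Prop) (c c' : R -> X) :
  is_ruler d l c -> is_ruler d l c' -> exists e k, forall t, c' t = c (e * t + k).
Proof.
  intros (_ & Hsur & _ & Hd) (Hin' & _ & _ & Hd').
  destruct (Hsur (c' 0) (Hin' 0)) as [s0 Hs0].
  destruct (Hsur (c' 1) (Hin' 1)) as [s1 Hs1].
  exists (s1 - s0), s0. intro t.
  destruct (Hsur (c' t) (Hin' t)) as [s Hs].
  rewrite <- Hs. f_equal. apply real_isometry_affine.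
  - rewrite <- Hd, Hs1, Hs0, Hd'. replace (1 - 0) with 1 by ring. apply Rabs_R1.
  - rewrite <- Hd, Hs, Hs0, Hd'. now replace (t - 0) with t by ring.
  - now rewrite <- Hd, Hs, Hs1, Hd'.
Qed.

(* In a reduced Birkhoff--Beatley system every point lies on a line, so d x x = 0. *)
Lemma reduced_BB_dist_refl {X : Type} (L : (X -> Prop) -> Prop) (d : X -> X -> R) :
  reduced_BB L d -> forall x, d x x = 0.
Proof.
  intros [[a [b Hab]] [Hu Hr]] x.
  assert (Hy : exists y, x <> y).
  { destruct (classic (x = a)) as [->|Hxa]; [exists b | exists a]; auto. }
  destruct Hy as [y Hy].
  destruct (Hu x y Hy) as [l [[Hl [Hx _]] _]].
  destruct (Hr l Hl) as [c (_ & Hsur & _ & Hd)].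
  destruct (Hsur x Hx) as [t <-]. rewrite Hd.
  replace (t - t) with 0 by ring. apply Rabs_R0.
Qed.

Section VerticalExtension.

Variable X : Type.
Variable L : (X -> Prop) -> Prop.
Variable d : X -> X -> R.

Definition vertical (x : X) : X * R -> Prop := fun p => fst p = x.

Definition slant (c : R -> X) (A B C D t : R) : X * R := (c (A * t + B), C * t + D).

Lemma vertical_image (x : X) : vertical x = image (fun t => (x, t)).
Proof.
  apply functional_extensionality. intros [z w]. apply propositional_extensionality.
  unfold vertical, image; simpl. split.
  - intros ->. now exists w.
  - now intros [t [= -> _]].
Qed.

Lemma vext_slant_image (c : R -> X) (a s0 s1 y0 y1 : R) :
  (fun p => exists t : R, p = (c (a * t * (s1 - s0) + s0), a * t * (y1 - y0) + y0))
  = image (slant c (a * (s1 - s0)) s0 (a * (y1 - y0)) y0).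
Proof.
  apply (image_ext (fun t => (c (a * t * (s1 - s0) + s0), a * t * (y1 - y0) + y0))).
  intro t. unfold slant. f_equal; [f_equal|]; ring.
Qed.

Lemma slant_dist (c : R -> X) (A B C D : R) :
  (forall u v, d (c u) (c v) = Rabs (u - v)) -> A ^ 2 + C ^ 2 = 1 ->
  forall t s, vext_d d (slant c A B C D t) (slant c A B C D s) = Rabs (t - s).
Proof.
  intros Hd HAC t s. unfold vext_d, slant; cbn [fst snd].
  rewrite Hd, pow2_abs.
  replace ((A * t + B - (A * s + B)) ^ 2 + (C * t + D - (C * s + D)) ^ 2)
    with ((t - s) ^ 2 * (A ^ 2 + C ^ 2)) by ring.
  rewrite HAC, Rmult_1_r. apply sqrt_pow2_abs.
Qed.

Lemma vertical_dist (x : X) : d x x = 0 ->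
  forall t s, vext_d d (x, t) (x, s) = Rabs (t - s).
Proof.
  intros Hx t s. unfold vext_d; cbn [fst snd]. rewrite Hx.
  replace (0 ^ 2 + (t - s) ^ 2) with ((t - s) ^ 2) by ring. apply sqrt_pow2_abs.
Qed.

Lemma slant_fst_determines (c : R -> X) (A B C D : R) (p q : X * R) :
  (forall u v, c u = c v -> u = v) -> A <> 0 ->
  image (slant c A B C D) p -> image (slant c A B C D) q -> fst p = fst q -> p = q.
Proof.
  intros Hinj HA [t ->] [s ->] Hfst. unfold slant in *; cbn [fst] in Hfst.
  apply Hinj in Hfst.
  assert (t = s) as -> by (apply Rmult_eq_reg_l with A; [lra | exact HA]).
  reflexivity.
Qed.

Lemma slant_fst_on_line (l : X -> Prop) (c : R -> X) (A B C D : R) (p : X * R) :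
  is_ruler d l c -> image (slant c A B C D) p -> l (fst p).
Proof. intros [Hin _] [t ->]. apply Hin. Qed.

Lemma slant_image_reparam (c c' : R -> X) (e k A B C D : R) :
  (forall t, c' t = c (e * t + k)) ->
  image (slant c' A B C D) = image (slant c (e * A) (e * B + k) C D).
Proof.
  intro Hc. apply image_ext. intro t. unfold slant. rewrite Hc.
  f_equal; f_equal; ring.
Qed.

Lemma slant_image_eq (c : R -> X) (A B C D A' B' C' D' : R) (p q : X * R) :
  (forall u v, c u = c v -> u = v) -> p <> q ->
  image (slant c A B C D) p -> image (slant c A B C D) q ->
  image (slant c A' B' C' D') p -> image (slant c A' B' C' D') q ->
  image (slant c A B C D) = image (slant c A' B' C' D').
Proof.
  intros Hinj Hpq [t1 Hp] [t2 Hq] [t1' Hp'] [t2' Hq'].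
  assert (Ht : t1 <> t2) by (intros ->; apply Hpq; congruence).
  assert (Ht' : t1' <> t2') by (intros ->; apply Hpq; congruence).
  rewrite Hp in Hp'. rewrite Hq in Hq'. unfold slant in Hp', Hq'.
  injection Hp' as E1 E2. injection Hq' as F1 F2.
  apply Hinj in E1. apply Hinj in F1.
  apply functional_extensionality. intro z. apply propositional_extensionality.
  unfold image, slant. split; intros [t ->].
  - destruct (affine_image_incl A B C D A' B' C' D' t1 t2 t1' t2' Ht E1 E2 F1 F2 t)
      as [t' [G1 G2]].
    exists t'. now rewrite G1, G2.
  - destruct (affine_image_incl A' B' C' D' A B C D t1' t2' t1 t2 Ht'
      (eq_sym E1) (eq_sym E2) (eq_sym F1) (eq_sym F2) t) as [t' [G1 G2]].
    exists t'. now rewrite G1, G2.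
Qed.

Lemma vext_L_cases (S : X * R -> Prop) : vext_L L d S ->
  (exists l c A B C D, L l /\ is_ruler d l c /\ A <> 0 /\ A ^ 2 + C ^ 2 = 1 /\
     S = image (slant c A B C D))
  \/ (exists x, S = vertical x).
Proof.
  intros (x0 & y0 & x1 & y1 & _ &
          [[Hx (l & c & s0 & s1 & Hl & _ & _ & Hc & Hs0 & Hs1 & HS)] | [_ HS]]).
  - left. cbv zeta in HS. rewrite vext_slant_image in HS.
    assert (Hs : s0 - s1 <> 0) by (intro; apply Hx; rewrite <- Hs0, <- Hs1; f_equal; lra).
    destruct (inv_norm_spec (s0 - s1) (y0 - y1) Hs) as [Ha Hnorm].
    set (a := / sqrt ((s0 - s1) ^ 2 + (y0 - y1) ^ 2)) in *.
    exists l, c, (a * (s1 - s0)), s0, (a * (y1 - y0)), y0.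
    split; [exact Hl | split; [exact Hc | split; [| split; [| exact HS]]]].
    + apply Rmult_integral_contrapositive. split; [exact Ha | lra].
    + rewrite <- Hnorm. ring.
  - right. now exists x0.
Qed.

Lemma vext_L_through (p q : X * R) : reduced_BB L d -> p <> q ->
  exists S, vext_L L d S /\ S p /\ S q.
Proof.
  intros [_ [Hu Hr]] Hpq. destruct p as [x0 y0], q as [x1 y1].
  destruct (classic (x0 = x1)) as [<-|Hx].
  - exists (vertical x0). split; [|split; reflexivity].
    exists x0, y0, x0, y1. split; [exact Hpq | now right].
  - destruct (Hu x0 x1 Hx) as [l [[Hl [H0 H1]] _]].
    destruct (Hr l Hl) as [c Hc].
    pose proof Hc as (_ & Hsur & _).
    destruct (Hsur x0 H0) as [s0 Hs0]. destruct (Hsur x1 H1) as [s1 Hs1].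
    assert (Hs : s0 - s1 <> 0) by (intro; apply Hx; rewrite <- Hs0, <- Hs1; f_equal; lra).
    destruct (inv_norm_spec (s0 - s1) (y0 - y1) Hs) as [Ha _].
    set (a := / sqrt ((s0 - s1) ^ 2 + (y0 - y1) ^ 2)) in *.
    exists (fun p => exists t : R, p = (c (a * t * (s1 - s0) + s0), a * t * (y1 - y0) + y0)).
    split; [|split].
    + exists x0, y0, x1, y1. split; [exact Hpq|]. left. split; [exact Hx|].
      exists l, c, s0, s1. do 6 (split; [assumption|]). reflexivity.
    + exists 0. rewrite <- Hs0. f_equal; [f_equal|]; ring.
    + exists (/ a). rewrite <- Hs1. f_equal; [f_equal|]; field; exact Ha.
Qed.

Lemma vext_L_unique (S S' : X * R -> Prop) (p q : X * R) : reduced_BB L d ->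
  vext_L L d S -> vext_L L d S' -> p <> q -> S p -> S q -> S' p -> S' q -> S = S'.
Proof.
  intros [_ [Hu _]] HS HS' Hpq Hp Hq Hp' Hq'.
  destruct (vext_L_cases S HS) as [(l & c & A & B & C & D & Hl & Hc & HA & _ & ->) | [x ->]];
  destruct (vext_L_cases S' HS') as
      [(l' & c' & A' & B' & C' & D' & Hl' & Hc' & HA' & _ & ->) | [x' ->]].
  - assert (Hfst : fst p <> fst q)
      by (intro; apply Hpq; apply (slant_fst_determines c A B C D); try apply Hc; auto).
    assert (Hll' : l = l').
    { destruct (Hu (fst p) (fst q) Hfst) as [l0 [_ Huniq]].
      transitivity l0; [symmetry|]; apply Huniq;
        (split; [assumption | split]); eapply slant_fst_on_line; eassumption. }
    subst l'.
    destruct (ruler_reparam d l c c' Hc Hc') as [e [k Hek]].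
    rewrite (slant_image_reparam c c' e k) in Hp', Hq' |- * by exact Hek.
    apply (slant_image_eq c _ _ _ _ _ _ _ _ p q); try apply Hc; assumption.
  - exfalso. apply Hpq. apply (slant_fst_determines c A B C D); try apply Hc; auto.
    unfold vertical in Hp', Hq'. congruence.
  - exfalso. apply Hpq. apply (slant_fst_determines c' A' B' C' D'); try apply Hc'; auto.
    unfold vertical in Hp, Hq. congruence.
  - unfold vertical in Hp, Hp'. now subst x x'.
Qed.

Lemma vext_L_ruler (S : X * R -> Prop) : reduced_BB L d -> vext_L L d S ->
  exists c, is_ruler (vext_d d) S c.
Proof.
  intros HBB HS.
  destruct (vext_L_cases S HS) as [(l & c & A & B & C & D & _ & Hc & _ & HAC & ->) | [x ->]].
  - exists (slant c A B C D). apply isometry_ruler, slant_dist; [apply Hc | exact HAC].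
  - exists (fun t => (x, t)). rewrite vertical_image.
    apply isometry_ruler, vertical_dist. exact (reduced_BB_dist_refl L d HBB x).
Qed.

End VerticalExtension.

Theorem lemma3 (X : Type) (L : (X -> Prop) -> Prop) (d : X -> X -> R) :
  reduced_BB L d -> reduced_BB (vext_L L d) (vext_d d).
Proof.
  intro HBB. split; [|split].
  - destruct HBB as [[a _] _]. exists (a, 0), (a, 1). intros [= H]. lra.
  - intros p q Hpq.
    destruct (vext_L_through X L d p q HBB Hpq) as [S [HS [Hp Hq]]].
    exists S. split; [now repeat split|].
    intros S' (HS' & Hp' & Hq').
    exact (vext_L_unique X L d S S' p q HBB HS HS' Hpq Hp Hq Hp' Hq').
  - intros S HS. exact (vext_L_ruler X L d S HBB HS).
Qed.
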